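(* Let $n$ be an integer and $r>0$. Then the function $F(\eta)=\eta^{2}\frac{I_n'(\eta^{-1}r)}{I_n(\eta^{-1}r)}$ is strictly monotonically increasing in $\eta\in(0,\infty)$.
   Context: $I_n$ denotes the modified Bessel function of the first kind of order $n$ (with $I_{-n}=I_n$ for integer $n$). *)

From Stdlib Require Import Reals ZArith.
From Coquelicot Require Import Coquelicot.
Open Scope R_scope.

(* Modified Bessel function of the first kind of integer order n:
   I_n(x) = sum_{k>=0} (x/2)^(2k+|n|) / (k! (k+|n|)!),
   which gives I_{-n} = I_n for integer n. *)
Definition besselI (n : Z) (x : R) : R :=
  Series (fun k : nat =>
    (x / 2) ^ (2 * k + Z.abs_nat n) / (INR (fact k) * INR (fact (k + Z.abs_nat n)))).

Definition besselI' (n : Z) (x : R) : R := Derive (besselI n) x.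

Definition F_eta (n : Z) (r eta : R) : R :=
  eta ^ 2 * (besselI' n (/ eta * r) / besselI n (/ eta * r)).

From Stdlib Require Import Reals ZArith Lra Lia Psatz.
From Coquelicot Require Import Coquelicot.
Open Scope R_scope.

(* With m = |n|, I_n(x) = (x/2)^m S((x/2)^2) where S(y) = sum_k y^k / (k! (k+m)!), so
   eta^2 I_n'(r/eta) / I_n(r/eta) = m eta^3 / r + (eta r / 2) T(r^2 / (4 eta^2)) with T = S'/S.
   The coefficients of S' and S have ratio 1/(k+m+1), decreasing in k, and this makes T
   strictly decreasing on [0, oo): for y < w the cross differences
   A_N(y) B_N(w) - A_N(w) B_N(y) of the partial sums of S' and S increase with N and are
   positive from N = 1 on.  As T > 0 and its argument decreases in eta, both terms of F
   increase. *)

Definition pseries_sum_n (a : nat -> R) (x : R) (N : nat) : R :=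
  sum_n (fun k => a k * x ^ k) N.

Lemma pseries_sum_n_O a x : pseries_sum_n a x 0 = a 0%nat.
Proof. unfold pseries_sum_n. rewrite sum_O. simpl. ring. Qed.

Lemma pseries_sum_n_S a x N :
  pseries_sum_n a x (S N) = pseries_sum_n a x N + a (S N) * x ^ S N.
Proof. unfold pseries_sum_n. now rewrite sum_Sn. Qed.

Lemma is_lim_seq_pseries_sum_n (a : nat -> R) (x l : R) :
  is_pseries a x l -> is_lim_seq (pseries_sum_n a x) l.
Proof.
  intro H. apply (is_lim_seq_ext (sum_n (fun k => scal (pow_n x k) (a k)))); [|exact H].
  intro N. apply sum_n_ext. intro k.
  rewrite pow_n_pow. unfold scal; simpl. unfold mult; simpl. ring.
Qed.

Lemma is_pseries_gt0 (b : nat -> R) y B :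
  0 < b 0%nat -> (forall k, 0 <= b k) -> 0 <= y -> is_pseries b y B -> 0 < B.
Proof.
  intros b0_gt0 b_ge0 y_ge0 HB.
  assert (b0_le : forall N, b 0%nat <= pseries_sum_n b y N).
  { induction N as [|N IHN].
    - rewrite pseries_sum_n_O. lra.
    - rewrite pseries_sum_n_S.
      pose proof (Rmult_le_pos _ _ (b_ge0 (S N)) (pow_le y (S N) y_ge0)). lra. }
  pose proof (is_lim_seq_le _ _ _ _ b0_le (is_lim_seq_const _)
                (is_lim_seq_pseries_sum_n _ _ _ HB)) as H.
  simpl in H. lra.
Qed.

Lemma pow_cross_le y w j k :
  0 <= y <= w -> (j <= k)%nat -> y ^ k * w ^ j <= y ^ j * w ^ k.
Proof.
  intros [y_ge0 y_le_w] jk.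
  replace k with (j + (k - j))%nat by lia. rewrite !pow_add.
  pose proof (pow_incr y w (k - j) (conj y_ge0 y_le_w)).
  pose proof (Rmult_le_pos _ _ (pow_le y j y_ge0) (pow_le w j (Rle_trans _ _ _ y_ge0 y_le_w))).
  nra.
Qed.

Section PseriesRatio.

Variables a b : nat -> R.
Hypothesis ratio_noninc : forall j k, (j <= k)%nat -> a k * b j <= a j * b k.

Lemma cross_term_ge0 y w j k : 0 <= y <= w ->
  0 <= (a j * b k - a k * b j) * (y ^ j * w ^ k - y ^ k * w ^ j).
Proof.
  intro yw. destruct (le_lt_dec j k) as [jk | kj].
  - pose proof (ratio_noninc j k jk). pose proof (pow_cross_le y w j k yw jk). nra.
  - apply Nat.lt_le_incl in kj.
    pose proof (ratio_noninc k j kj). pose proof (pow_cross_le y w k j yw kj). nra.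
Qed.

Variables y w : R.
Hypothesis y_ge0 : 0 <= y.
Hypothesis y_lt_w : y < w.

Let cross (N : nat) : R :=
  pseries_sum_n a y N * pseries_sum_n b w N - pseries_sum_n a w N * pseries_sum_n b y N.

Lemma cross_S N : cross (S N) = cross N +
  sum_n (fun j => (a j * b (S N) - a (S N) * b j) * (y ^ j * w ^ S N - y ^ S N * w ^ j)) N.
Proof.
  assert (expand : forall c d W Y M,
    sum_n (fun j => (a j * c - d * b j) * (y ^ j * W - Y * w ^ j)) M =
    c * W * pseries_sum_n a y M - c * Y * pseries_sum_n a w M
    - d * W * pseries_sum_n b y M + d * Y * pseries_sum_n b w M).
  { intros c d W Y M. induction M as [|M IHM].
    - rewrite sum_O, !pseries_sum_n_O. simpl. ring.
    - rewrite sum_Sn, !pseries_sum_n_S, IHM. unfold plus; simpl. ring. }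
  rewrite expand. unfold cross. rewrite !pseries_sum_n_S. ring.
Qed.

Lemma cross_ge_1 N : cross 1 <= cross (S N).
Proof.
  induction N as [|N IHN]; [lra|].
  rewrite (cross_S (S N)), sum_n_Reals.
  pose proof (cond_pos_sum _ (S N)
    (fun j => cross_term_ge0 y w j (S (S N)) (conj y_ge0 (Rlt_le _ _ y_lt_w)))).
  lra.
Qed.

Hypothesis ratio_01 : a 1%nat * b 0%nat < a 0%nat * b 1%nat.

Lemma cross_1_gt0 : 0 < cross 1.
Proof.
  replace (cross 1) with ((a 0%nat * b 1%nat - a 1%nat * b 0%nat) * (w - y)).
  - apply Rmult_lt_0_compat; lra.
  - unfold cross. rewrite !pseries_sum_n_S, !pseries_sum_n_O. simpl. ring.
Qed.

Lemma is_pseries_cross_gt0 Ay Aw By Bw :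
  is_pseries a y Ay -> is_pseries a w Aw -> is_pseries b y By -> is_pseries b w Bw ->
  Aw * By < Ay * Bw.
Proof.
  intros HAy HAw HBy HBw.
  assert (lim : is_lim_seq (fun N => cross (S N)) (Ay * Bw - Aw * By)).
  { apply (is_lim_seq_incr_1 cross). unfold cross.
    apply is_lim_seq_minus'; apply is_lim_seq_mult'; now apply is_lim_seq_pseries_sum_n. }
  pose proof (is_lim_seq_le _ _ _ _ cross_ge_1 (is_lim_seq_const _) lim) as H.
  simpl in H. pose proof cross_1_gt0. lra.
Qed.

End PseriesRatio.

Definition besselI_coef (m k : nat) : R := / (INR (fact k) * INR (fact (k + m))).

Definition besselS (m : nat) (y : R) : R := PSeries (besselI_coef m) y.

Definition besselS_logderiv (m : nat) (y : R) : R :=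
  PSeries (PS_derive (besselI_coef m)) y / besselS m y.

Lemma INR_fact_gt0 k : 0 < INR (fact k).
Proof. apply lt_0_INR, lt_O_fact. Qed.

Lemma besselI_coef_gt0 m k : 0 < besselI_coef m k.
Proof. apply Rinv_0_lt_compat, Rmult_lt_0_compat; apply INR_fact_gt0. Qed.

Lemma besselI_coef_S m k :
  besselI_coef m (S k) = besselI_coef m k / (INR (S k) * INR (S k + m)).
Proof.
  unfold besselI_coef. replace (S k + m)%nat with (S (k + m)) by lia.
  rewrite !fact_simpl, !mult_INR.
  pose proof (INR_fact_gt0 k). pose proof (INR_fact_gt0 (k + m)).
  pose proof (lt_0_INR (S k) (Nat.lt_0_succ k)).
  pose proof (lt_0_INR (S (k + m)) (Nat.lt_0_succ (k + m))).
  field. repeat split; lra.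
Qed.

Lemma PS_derive_besselI_coef m k :
  PS_derive (besselI_coef m) k = besselI_coef m k / INR (S k + m).
Proof.
  unfold PS_derive. rewrite besselI_coef_S.
  pose proof (besselI_coef_gt0 m k).
  pose proof (lt_0_INR (S k) (Nat.lt_0_succ k)).
  pose proof (lt_0_INR (S k + m) (Nat.lt_0_succ (k + m))).
  field. lra.
Qed.

Lemma CV_radius_besselI_coef m : CV_radius (besselI_coef m) = p_infty.
Proof.
  apply CV_radius_infinite_DAlembert.
  - intro k. apply Rgt_not_eq, besselI_coef_gt0.
  - apply (is_lim_seq_le_le (fun _ => 0) _ (fun k => / INR (S k))).
    + intro k. rewrite besselI_coef_S.
      pose proof (besselI_coef_gt0 m k).
      pose proof (lt_0_INR (S k) (Nat.lt_0_succ k)).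
      assert (1 <= INR (S k + m)) by (rewrite <- INR_1; apply le_INR; lia).
      replace (besselI_coef m k / (INR (S k) * INR (S k + m)) / besselI_coef m k)
        with (/ (INR (S k) * INR (S k + m))) by (field; lra).
      rewrite Rabs_pos_eq by (apply Rlt_le, Rinv_0_lt_compat; nra).
      split.
      * apply Rlt_le, Rinv_0_lt_compat; nra.
      * apply Rinv_le_contravar; nra.
    + apply is_lim_seq_const.
    + apply (is_lim_seq_incr_1 (fun k => / INR k)).
      replace (Finite 0) with (Rbar_inv p_infty) by reflexivity.
      apply is_lim_seq_inv; [apply is_lim_seq_INR | discriminate].
Qed.

Lemma is_pseries_besselS m y : is_pseries (besselI_coef m) y (besselS m y).
Proof.
  apply PSeries_correct, CV_radius_inside. now rewrite CV_radius_besselI_coef.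
Qed.

Lemma is_pseries_besselS_derive m y :
  is_pseries (PS_derive (besselI_coef m)) y (PSeries (PS_derive (besselI_coef m)) y).
Proof.
  apply PSeries_correct, CV_radius_inside.
  now rewrite CV_radius_derive, CV_radius_besselI_coef.
Qed.

Lemma besselS_gt0 m y : 0 <= y -> 0 < besselS m y.
Proof.
  intro y_ge0. apply (is_pseries_gt0 _ y _ (besselI_coef_gt0 m 0)); auto.
  - intro k. apply Rlt_le, besselI_coef_gt0.
  - apply is_pseries_besselS.
Qed.

Lemma besselS_derive_gt0 m y : 0 <= y -> 0 < PSeries (PS_derive (besselI_coef m)) y.
Proof.
  intro y_ge0.
  assert (coef_gt0 : forall k, 0 < PS_derive (besselI_coef m) k).
  { intro k. rewrite PS_derive_besselI_coef.
    pose proof (besselI_coef_gt0 m k). pose proof (lt_0_INR (S k + m) (Nat.lt_0_succ _)).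
    apply Rdiv_lt_0_compat; lra. }
  apply (is_pseries_gt0 _ y _ (coef_gt0 0%nat)); auto.
  - intro k. apply Rlt_le, coef_gt0.
  - apply is_pseries_besselS_derive.
Qed.

Lemma besselS_logderiv_gt0 m y : 0 <= y -> 0 < besselS_logderiv m y.
Proof.
  intro y_ge0. apply Rdiv_lt_0_compat.
  - now apply besselS_derive_gt0.
  - now apply besselS_gt0.
Qed.

Lemma besselS_logderiv_decreasing m y w :
  0 <= y -> y < w -> besselS_logderiv m w < besselS_logderiv m y.
Proof.
  intros y_ge0 y_lt_w.
  set (c := besselI_coef m).
  assert (ratio_le : forall j k, (j <= k)%nat ->
            PS_derive c k * c j <= PS_derive c j * c k).
  { intros j k jk. unfold c. rewrite !PS_derive_besselI_coef.
    pose proof (Rmult_lt_0_compat _ _ (besselI_coef_gt0 m j) (besselI_coef_gt0 m k)).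
    assert (/ INR (S k + m) <= / INR (S j + m))
      by (apply Rinv_le_contravar; [apply lt_0_INR; lia | apply le_INR; lia]).
    unfold Rdiv. nra. }
  assert (ratio_lt : PS_derive c 1 * c 0%nat < PS_derive c 0%nat * c 1%nat).
  { unfold c. rewrite !PS_derive_besselI_coef.
    pose proof (Rmult_lt_0_compat _ _ (besselI_coef_gt0 m 0) (besselI_coef_gt0 m 1)).
    assert (/ INR (S 1 + m) < / INR (S 0 + m)).
    { apply Rinv_lt_contravar; [|apply lt_INR; lia].
      apply Rmult_lt_0_compat; apply lt_0_INR; lia. }
    unfold Rdiv. nra. }
  pose proof (is_pseries_cross_gt0 _ _ ratio_le y w y_ge0 y_lt_w ratio_lt _ _ _ _
    (is_pseries_besselS_derive m y) (is_pseries_besselS_derive m w)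
    (is_pseries_besselS m y) (is_pseries_besselS m w)).
  pose proof (besselS_gt0 m y y_ge0). pose proof (besselS_gt0 m w ltac:(lra)).
  unfold besselS_logderiv.
  apply (Rmult_lt_reg_r (besselS m y * besselS m w)); [nra|].
  field_simplify; lra.
Qed.

Lemma besselI_besselS n x :
  besselI n x = (x / 2) ^ Z.abs_nat n * besselS (Z.abs_nat n) ((x / 2) ^ 2).
Proof.
  unfold besselI, besselS, PSeries. rewrite <- Series_scal_l.
  apply Series_ext. intro k. unfold besselI_coef.
  rewrite pow_add, pow_mult. unfold Rdiv. ring.
Qed.

Lemma besselI_gt0 n x : 0 < x -> 0 < besselI n x.
Proof.
  intro x_gt0. rewrite besselI_besselS.
  apply Rmult_lt_0_compat; [apply pow_lt; lra | apply besselS_gt0, pow2_ge_0].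
Qed.

Lemma besselI'_eq n x : x <> 0 ->
  besselI' n x =
  (INR (Z.abs_nat n) / x + x / 2 * besselS_logderiv (Z.abs_nat n) ((x / 2) ^ 2)) * besselI n x.
Proof.
  intro x_neq0. set (m := Z.abs_nat n).
  assert (half : is_derive (fun t : R => t / 2) x (/ 2)) by (auto_derive; [easy | field]).
  assert (S_comp : is_derive (fun t => besselS m ((t / 2) ^ 2)) x
                     (x / 2 * PSeries (PS_derive (besselI_coef m)) ((x / 2) ^ 2))).
  { assert (dS : is_derive (besselS m) ((x / 2) ^ 2)
                   (PSeries (PS_derive (besselI_coef m)) ((x / 2) ^ 2))).
    { apply is_derive_PSeries. now rewrite CV_radius_besselI_coef. }
    replace (x / 2 * _) with (scal (INR 2 * / 2 * (x / 2) ^ pred 2)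
                                   (PSeries (PS_derive (besselI_coef m)) ((x / 2) ^ 2)))
      by (unfold scal; simpl; unfold mult; simpl; field).
    exact (is_derive_comp _ _ _ _ _ dS (is_derive_pow _ 2 x _ half)). }
  assert (pow_pred : INR m * / 2 * (x / 2) ^ pred m = INR m / x * (x / 2) ^ m).
  { destruct m as [|m']; [simpl; field; easy|].
    simpl pred. rewrite <- tech_pow_Rmult. field. easy. }
  unfold besselI'.
  rewrite (Derive_ext _ (fun t => (t / 2) ^ m * besselS m ((t / 2) ^ 2)) _ (besselI_besselS n)).
  apply is_derive_unique.
  replace ((INR m / x + _) * besselI n x) with
    (INR m * / 2 * (x / 2) ^ pred m * besselS m ((x / 2) ^ 2)
     + (x / 2) ^ m * (x / 2 * PSeries (PS_derive (besselI_coef m)) ((x / 2) ^ 2))).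
  - exact (is_derive_mult _ _ _ _ _ (is_derive_pow _ m x _ half) S_comp Rmult_comm).
  - rewrite pow_pred, besselI_besselS. fold m. unfold besselS_logderiv.
    pose proof (besselS_gt0 m ((x / 2) ^ 2) (pow2_ge_0 _)).
    field. lra.
Qed.

Lemma F_eta_eq n r eta : 0 < r -> 0 < eta ->
  F_eta n r eta = INR (Z.abs_nat n) * eta ^ 3 / r
                  + eta * r / 2 * besselS_logderiv (Z.abs_nat n) ((/ eta * r / 2) ^ 2).
Proof.
  intros r_gt0 eta_gt0.
  assert (x_gt0 : 0 < / eta * r) by (apply Rmult_lt_0_compat; [apply Rinv_0_lt_compat|]; lra).
  unfold F_eta. rewrite besselI'_eq by lra.
  pose proof (besselI_gt0 n _ x_gt0).
  field. lra.
Qed.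

Theorem corollary2p1 (n : Z) (r : R) (hr : 0 < r) :
  forall eta1 eta2 : R, 0 < eta1 -> eta1 < eta2 -> F_eta n r eta1 < F_eta n r eta2.
Proof.
  intros eta1 eta2 eta1_gt0 eta1_lt_eta2.
  rewrite !F_eta_eq by lra.
  set (m := Z.abs_nat n).
  set (x1 := / eta1 * r / 2). set (x2 := / eta2 * r / 2).
  assert (x2_lt_x1 : 0 < x2 < x1).
  { unfold x1, x2. pose proof (Rinv_0_lt_contravar _ _ eta1_gt0 eta1_lt_eta2).
    pose proof (Rinv_0_lt_compat _ (Rlt_trans _ _ _ eta1_gt0 eta1_lt_eta2)). nra. }
  assert (sq_lt : x2 ^ 2 < x1 ^ 2) by nra.
  assert (INR m * eta1 ^ 3 / r <= INR m * eta2 ^ 3 / r).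
  { apply Rmult_le_compat_r; [apply Rlt_le, Rinv_0_lt_compat; lra|].
    apply Rmult_le_compat_l; [apply pos_INR | apply pow_incr; lra]. }
  assert (eta1 * r / 2 * besselS_logderiv m (x1 ^ 2)
          < eta2 * r / 2 * besselS_logderiv m (x2 ^ 2)).
  { pose proof (besselS_logderiv_decreasing m _ _ (pow2_ge_0 x2) sq_lt).
    pose proof (besselS_logderiv_gt0 m _ (pow2_ge_0 x1)).
    apply Rmult_le_0_lt_compat; nra. }
  lra.
Qed.
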